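(* Let $\omega(r)=\exp(\varepsilon r)$ and $\Omega(r)=\exp(\delta r)$, where $\delta>\varepsilon>0$. Then for each $r>0$ there exists $R>0$ such that $\omega^n(R)\ge\Omega^n(r)$ for all $n\in\mathbb N$.
   Context: $\omega^n,\Omega^n$ denote $n$-th iterates. *)

From Stdlib Require Import Reals.
Open Scope R_scope.

Definition iterR (n : nat) (f : R -> R) (x : R) : R := Nat.iter n f x.

From Stdlib Require Import Reals Lra Psatz.
Open Scope R_scope.

(* Write x_n = omega^n(R) and y_n = Omega^n(r).  Fix a constant
   K > 0 with  eps * exp K >= delta + K  (possible since exp grows faster than
   any linear function).  The linear comparison
        eps * x >= delta * y + K,   y >= 0
   is preserved by one application of omega to x and Omega to y: indeed
   eps * exp(eps x) >= eps * exp K * exp(delta y) >= (delta + K) exp(delta y)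
   >= delta * exp(delta y) + K, because exp(delta y) >= 1.  Choosing
   R = (delta r + K)/eps makes the comparison hold at n = 0, so it holds for
   all n by a generic invariance principle for iterates; finally it implies
   x_n >= y_n since delta >= eps and K >= 0. *)

Lemma iterR_preserves (P : R -> R -> Prop) (f g : R -> R) :
  (forall x y, P x y -> P (f x) (g y)) ->
  forall n x y, P x y -> P (iterR n f x) (iterR n g y).
Proof.
  intros Hstep n x y Hxy; unfold iterR.
  induction n as [|n IH]; simpl; auto.
Qed.

(* Monotonicity of exp in non-strict form, via exp t >= 1 + t. *)
Lemma exp_le_compat (a b : R) : a <= b -> exp a <= exp b.
Proof.
  intros Hab.
  replace (exp b) with (exp (b - a) * exp a)
    by (rewrite <- exp_plus; f_equal; ring).
  assert (H1 := exp_ineq1_le (b - a)).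
  assert (H2 := exp_pos a).
  nra.
Qed.

(* exp eventually dominates any linear function: c * exp K >= d + K for some
   K > 0.  Take K = 4(d+1)/c + 1 and use exp K >= (1 + K/2)^2 >= K^2/4. *)
Lemma exp_beats_linear (c d : R) :
  0 < c -> 0 <= d -> exists K, 0 < K /\ c * exp K >= d + K.
Proof.
  intros Hc Hd.
  set (K := 4 * (d + 1) / c + 1).
  assert (HcK : c * (K - 1) = 4 * (d + 1)) by (unfold K; field; lra).
  assert (HK : 1 <= K) by nra.
  exists K; split; [lra|].
  assert (Hsq : (1 + K / 2) * (1 + K / 2) <= exp K).
  { replace (exp K) with (exp (K / 2) * exp (K / 2))
      by (rewrite <- exp_plus; f_equal; field).
    assert (H := exp_ineq1_le (K / 2)).
    apply Rmult_le_compat; lra. }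
  assert (Hquad : K * (d + 1) <= c * (K * K / 4)) by nra.
  nra.
Qed.

Section Comparison.

Variables eps delta K : R.
Hypothesis heps : 0 < eps.
Hypothesis hdelta : 0 <= delta.
Hypothesis hK0 : 0 <= K.
Hypothesis hK : eps * exp K >= delta + K.

Definition dominates (x y : R) : Prop := eps * x >= delta * y + K /\ 0 <= y.

Lemma dominates_step (x y : R) :
  dominates x y -> dominates (exp (eps * x)) (exp (delta * y)).
Proof.
  intros [Hxy Hy]; split; [|left; apply exp_pos].
  assert (Hbig : exp (delta * y + K) <= exp (eps * x)) by (apply exp_le_compat; lra).
  rewrite exp_plus in Hbig.
  assert (Hone : 1 <= exp (delta * y)).
  { assert (H := exp_ineq1_le (delta * y)). nra. }
  set (e := exp (delta * y)) in *.
  assert (Hlin : e * (delta + K) <= e * (eps * exp K)) by (apply Rmult_le_compat_l; lra).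
  nra.
Qed.

Lemma dominates_iter (n : nat) (x y : R) :
  dominates x y ->
  dominates (iterR n (fun t => exp (eps * t)) x) (iterR n (fun t => exp (delta * t)) y).
Proof. apply iterR_preserves, dominates_step. Qed.

End Comparison.

Theorem lemma3p3 (eps delta : R) (heps : 0 < eps) (hed : eps < delta) :
  forall r : R, 0 < r ->
  exists R0 : R, 0 < R0 /\
    forall n : nat,
      iterR n (fun x => exp (eps * x)) R0 >= iterR n (fun x => exp (delta * x)) r.
Proof.
  intros r hr.
  destruct (exp_beats_linear eps delta heps ltac:(lra)) as [K [HK Hc]].
  exists ((delta * r + K) / eps); split.
  { apply Rdiv_lt_0_compat; nra. }
  intro n.
  assert (Hstart : dominates eps delta K ((delta * r + K) / eps) r).
  { split; [right; field|]; lra. }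
  destruct (dominates_iter eps delta K heps ltac:(lra) ltac:(lra) Hc n _ _ Hstart)
    as [Hx Hy].
  (* eps * x_n >= delta * y_n + K >= eps * y_n, since y_n >= 0 and K > 0. *)
  nra.
Qed.
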